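(* Let $n\ge 2$ be an integer and $A\subseteq L_n$. Then $(X_n,\tau(A))$ is perfect (respectively Lindelöf, respectively $\sigma$-compact) if and only if the subspace $(L_n,\tau(A)|_{L_n})$ is perfect (respectively Lindelöf, respectively $\sigma$-compact).
   Context: For $\overline{x},\overline{a}\in\mathbb R^n$ let $|\overline{x}-\overline{a}|$ be the Euclidean distance and $B(\overline{a},\epsilon)=\{\overline{x}\in\mathbb R^n:|\overline{x}-\overline{a}|<\epsilon\}$. Let $P_n=\{\overline{x}\in\mathbb R^n: x_n>0\}$, $L_n=\{\overline{x}\in\mathbb R^n: x_n=0\}$, $X_n=P_n\cup L_n$. For $\overline{a}\in L_n$ and $\epsilon>0$ put $\overline{a(\epsilon)}=(a_1,\dots,a_{n-1},\epsilon)$ and $\tilde B(\overline{a},\epsilon)=\{\overline{a}\}\cup B(\overline{a(\epsilon)},\epsilon)$. For $A\subseteq L_n$, the topology $\tau(A)$ on $X_n$ is generated by the local bases: at $\overline{a}\in P_n$, the sets $B(\overline{a},\epsilon)$ with $0<\epsilon<a_n$; at $\overline{a}\in A$, the sets $B(\overline{a},\epsilon)\cap X_n$ with $\epsilon>0$; at $\overline{a}\in L_n\setminus A$, the sets $\tilde B(\overline{a},\epsilon)$ with $\epsilon>0$. A space is perfect if every closed set is a $G_\delta$-set. *)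

From HB Require Import structures.
From mathcomp Require Import all_boot all_order all_algebra.
From mathcomp Require Import all_classical.
From mathcomp Require Import Rstruct.

Set Implicit Arguments.
Unset Strict Implicit.
Unset Printing Implicit Defensive.
Import Order.TTheory GRing.Theory Num.Theory.
Local Open Scope ring_scope.
Local Open Scope classical_set_scope.

Definition Real : Type := Rdefinitions.R.

(* Points of R^{k.+1}; the last coordinate x_n is x 0 ord_max. *)
Definition pt (k : nat) := 'rV[Real]_k.+1.

Definition lastc {k : nat} (x : pt k) : Real := x 0 ord_max.

Definition edist {k : nat} (x a : pt k) : Real :=
  Num.sqrt (\sum_(i < k.+1) (x 0 i - a 0 i) ^+ 2).

Definition ball_e {k : nat} (a : pt k) (e : Real) : set (pt k) :=
  [set x | edist x a < e].

Definition Pn {k : nat} : set (pt k) := [set x | 0 < lastc x].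
Definition Ln {k : nat} : set (pt k) := [set x | lastc x = 0].
Definition Xn {k : nat} : set (pt k) := Pn `|` Ln.

Definition a_eps {k : nat} (a : pt k) (e : Real) : pt k :=
  \row_(i < k.+1) (if i == ord_max then e else a 0 i).

Definition tball {k : nat} (a : pt k) (e : Real) : set (pt k) :=
  [set a] `|` ball_e (a_eps a e) e.

Definition tau_open {k : nat} (A : set (pt k)) (U : set (pt k)) : Prop :=
  U `<=` Xn /\
  forall a, U a ->
    (Pn a -> exists e : Real, 0 < e /\ e < lastc a /\ ball_e a e `<=` U) /\
    (Ln a -> A a -> exists e : Real, 0 < e /\ ball_e a e `&` Xn `<=` U) /\
    (Ln a -> ~ A a -> exists e : Real, 0 < e /\ tball a e `<=` U).

Definition subspace_open {T : Type} (S' : set T) (op : set T -> Prop)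
  (V : set T) : Prop := exists U, op U /\ V = U `&` S'.

(* General topological notions for a space given by its carrier S
   and its family of open sets op (all subsets of S). *)
Definition perfect_sp {T : Type} (S : set T) (op : set T -> Prop) : Prop :=
  forall F : set T, F `<=` S -> op (S `\` F) ->
    exists G : nat -> set T, (forall j, op (G j)) /\ F = \bigcap_j G j.

Definition lindelof_sp {T : Type} (S : set T) (op : set T -> Prop) : Prop :=
  forall C : set (set T), (forall U, C U -> op U) ->
    S `<=` \bigcup_(U in C) U ->
    exists D : set (set T), [/\ D `<=` C, countable D & S `<=` \bigcup_(U in D) U].

Definition compact_sp {T : Type} (op : set T -> Prop) (K : set T) : Prop :=
  forall C : set (set T), (forall U, C U -> op U) ->
    K `<=` \bigcup_(U in C) U ->
    exists D : set (set T), [/\ D `<=` C, finite_set D & K `<=` \bigcup_(U in D) U].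

Definition sigma_compact_sp {T : Type} (S : set T) (op : set T -> Prop) : Prop :=
  exists K : nat -> set T,
    (forall j, K j `<=` S /\ compact_sp op (K j)) /\ S = \bigcup_j K j.

From Pilot Require Import Defs.
From HB Require Import structures.
From mathcomp Require Import all_boot all_order all_algebra.
From mathcomp Require Import all_classical topology normedtype.
From mathcomp Require Import Rstruct Rstruct_topology finmap lra.
Import Order.TTheory GRing.Theory Num.Theory.
Local Open Scope classical_set_scope.
Local Open Scope ring_scope.

Set Implicit Arguments.
Unset Strict Implicit.
Unset Printing Implicit Defensive.

(* P_n is tau(A)-open and tau(A) induces on it the Euclidean topology.  Every
   Euclidean open subset of P_n is the union of the countably many closed
   rational cubes it contains, and such a cube, lying at positive height, is
   both compact and closed in tau(A).  Hence P_n is sigma-compact (so Lindelof)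
   and each tau(A)-open subset of P_n is F_sigma in X_n.  Its complement L_n
   is closed, so it inherits each of the three properties from X_n; conversely
   each property passes from L_n and P_n to X_n = P_n u L_n. *)

Lemma countableU T (A B : set T) : countable A -> countable B -> countable (A `|` B).
Proof.
move=> cA cB; rewrite -bigcup2E; apply: bigcup_countable => // i _.
by rewrite /bigcup2; case: i => [|[|i]].
Qed.

Lemma countable_subset T (A B : set T) : A `<=` B -> countable B -> countable A.
Proof. by move=> AB; apply: sub_countable; apply: subset_card_le. Qed.

Lemma countable_image T U (A : set T) (f : T -> U) :
  countable A -> countable (f @` A).
Proof. exact: sub_countable (card_image_le f A). Qed.

Section Interleave.
Variable T : Type.
Implicit Types G H : nat -> set T.

Definition interleave G H (j : nat) : set T := if odd j then H j./2 else G j./2.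

Lemma interleave_double G H j : interleave G H j.*2 = G j.
Proof. by rewrite /interleave odd_double doubleK. Qed.

Lemma interleave_doubleS G H j : interleave G H j.*2.+1 = H j.
Proof. by rewrite /interleave /= odd_double uphalf_double. Qed.

Lemma bigcup_interleave G H :
  \bigcup_j interleave G H j = \bigcup_j G j `|` \bigcup_j H j.
Proof.
apply/seteqP; split=> x.
  by case=> j _; rewrite /interleave; case: odd => h; [right | left]; exists j./2.
case=> -[j _ h]; [exists j.*2; rewrite ?interleave_double //|].
by exists j.*2.+1; rewrite ?interleave_doubleS.
Qed.

Lemma bigcap_interleave G H :
  \bigcap_j interleave G H j = \bigcap_j G j `&` \bigcap_j H j.
Proof.
apply/seteqP; split=> x.
  move=> h; split=> j _.
    by have := h j.*2 I; rewrite interleave_double.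
  by have := h j.*2.+1 I; rewrite interleave_doubleS.
by case=> hG hH j _; rewrite /interleave; case: odd; [exact: hH | exact: hG].
Qed.

End Interleave.

Lemma lindelof_sigma_compact T (S : set T) (op : set T -> Prop) :
  sigma_compact_sp S op -> lindelof_sp S op.
Proof.
move=> [K [hK SE]] C opC covS.
have /choice [D hD] : forall j, exists Dj : set (set T),
    [/\ Dj `<=` C, finite_set Dj & K j `<=` \bigcup_(U in Dj) U].
  move=> j; have [_ cptK] := hK j; apply: (cptK C opC) => x Kx.
  by apply: covS; rewrite SE; exists j.
exists (\bigcup_j D j); split.
- by move=> U [j _]; case: (hD j) => DC _ _; apply: DC.
- apply: bigcup_countable => [|j _]; first exact: countableP.
  by case: (hD j) => _ finD _; apply: finite_set_countable.
- rewrite SE => x [j _ Kx]; case: (hD j) => _ _ /(_ x Kx) [U DU Ux].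
  by exists U => //; exists j.
Qed.

(* [lindelof_sp] and [compact_sp] are [covering_sp] for [Q := countable] and
   [Q := finite_set]. *)
Definition covering_sp T (Q : set (set T) -> Prop) (op : set T -> Prop)
    (K : set T) : Prop :=
  forall C : set (set T), (forall U, C U -> op U) ->
    K `<=` \bigcup_(U in C) U ->
    exists D : set (set T), [/\ D `<=` C, Q D & K `<=` \bigcup_(U in D) U].

Definition Fsigma_sp T (S : set T) (op : set T -> Prop) (V : set T) : Prop :=
  exists Z : nat -> set T,
    (forall j, Z j `<=` S /\ op (S `\` Z j)) /\ V = \bigcup_j Z j.

Section ClosedComplementOfOpen.
Variables (T : Type) (X P L : set T) (op : set T -> Prop).
Hypotheses (opX : forall U, op U -> U `<=` X)
  (opU : forall U V, op U -> op V -> op (U `|` V))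
  (opP : op P) (XE : X = P `|` L) (PL0 : P `&` L = set0).
Local Notation opL := (subspace_open L op).

Lemma notP_L x : L x -> ~ P x.
Proof. by move=> Lx Px; have : (P `&` L) x by []; rewrite PL0. Qed.

Lemma L_sub_X : L `<=` X.
Proof. by rewrite XE; apply: subsetUr. Qed.

Lemma P_sub_X : P `<=` X.
Proof. by rewrite XE; apply: subsetUl. Qed.

Section Covers.
Variable Q : set (set T) -> Prop.
Hypotheses (Q_sub : forall D' D, D' `<=` D -> Q D -> Q D')
  (Q_image : forall (D : set (set T)) (f : set T -> set T), Q D -> Q (f @` D)).

Lemma covering_restrict K :
  K `<=` X -> covering_sp Q op K -> covering_sp Q opL (K `&` L).
Proof.
move=> KX covK C opC coverKL.
pose C' := [set U | op U /\ C (U `&` L)] `|` [set P].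
have opC' U : C' U -> op U by case=> [[]|->].
have coverK : K `<=` \bigcup_(U in C') U.
  move=> x Kx; have [Px|Lx] : (P `|` L) x by rewrite -XE; apply: KX.
    by exists P => //; right.
  have [V CV Vx] := coverKL x (conj Kx Lx); have [U [opU' VE]] := opC V CV.
  exists U; first by left; split => //; rewrite -VE.
  by move: Vx; rewrite VE => -[].
have [D [DC' QD coverD]] := covK C' opC' coverK.
exists [set V | C V /\ exists2 U, D U & V = U `&` L]; split.
- by move=> V [].
- by apply: Q_sub (Q_image (fun U => U `&` L) QD) => V [_ [U DU ->]]; exists U.
- move=> x [Kx Lx]; have [U DU Ux] := coverD x Kx.
  case: (DC' U DU) => [[_ CUL]|UP]; last by rewrite UP in Ux; case: (notP_L Lx).
  by exists (U `&` L) => //; split => //; exists U.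
Qed.

Lemma covering_lift K : K `<=` L -> covering_sp Q opL K -> covering_sp Q op K.
Proof.
move=> KL covK C opC coverK.
pose CL := [set V | exists2 U, C U & V = U `&` L].
have opCL V : CL V -> opL V by case=> U CU ->; exists U; split => //; apply: opC.
have coverKL : K `<=` \bigcup_(V in CL) V.
  move=> x Kx; have [U CU Ux] := coverK x Kx.
  by exists (U `&` L); [exists U | split => //; apply: KL].
have [D [DCL QD coverD]] := covK CL opCL coverKL.
have /choice [g hg] : forall V, exists U, D V -> C U /\ V = U `&` L.
  move=> V; have [/DCL [U CU VE]|nDV] := pselect (D V); first by exists U.
  by exists set0.
exists (g @` D); split.
- by move=> _ [V DV <-]; exact: (hg V DV).1.
- exact: Q_image.
- move=> x Kx; have [V DV Vx] := coverD x Kx; exists (g V); first by exists V.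
  by have [_ VE] := hg V DV; move: Vx; rewrite {1}VE => -[].
Qed.

End Covers.

Lemma perfect_closed_subspace : perfect_sp X op -> perfect_sp L opL.
Proof.
move=> perfX F FL [U [opU' LFE]].
have XFE : X `\` F = U `|` P.
  apply/seteqP; split=> x.
    move=> [Xx nFx]; have [Px|Lx] : (P `|` L) x by rewrite -XE.
      by right.
    by have : (L `\` F) x by []; rewrite LFE => -[]; left.
  case=> [Ux|Px]; last by split; [exact: P_sub_X | move=> /FL /notP_L].
  split; first exact: opX Ux.
  move=> Fx; have : (L `\` F) x by rewrite LFE; split => //; exact: FL.
  by case.
have FX : F `<=` X := subset_trans FL L_sub_X.
have [G [opG FE]] := perfX F FX (eq_ind_r op (opU opU' opP) XFE).
exists (fun j => G j `&` L); split; first by move=> j; exists (G j).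
rewrite FE; apply/seteqP; split=> x.
  by move=> Gx j _; split; [exact: Gx | apply: FL; rewrite FE].
by move=> GLx j _; have [] := GLx j I.
Qed.

Lemma perfect_from_closed_subspace :
  (forall V, op V -> Fsigma_sp X op (V `&` P)) ->
  perfect_sp L opL -> perfect_sp X op.
Proof.
move=> FsigmaP perfL F FX opXF.
have opLF : opL (L `\` (F `&` L)).
  exists (X `\` F); split => //; apply/seteqP; split=> x.
    by move=> [Lx nFLx]; split => //; split; [exact: L_sub_X | move=> Fx; apply: nFLx].
  by move=> [[_ nFx] Lx]; split => // -[].
have [G [opG FLE]] := perfL (F `&` L) (@subIsetr _ _ _) opLF.
have [U hU] := choice opG.
have [Z [closedZ XFPE]] := FsigmaP _ opXF.
exists (interleave (fun j => U j `|` P) (fun j => X `\` Z j)); split.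
  by move=> j; rewrite /interleave; case: odd; [exact: (closedZ _).2 | exact: opU (hU _).1 opP].
rewrite bigcap_interleave; apply/seteqP; split=> x.
- move=> Fx; split=> j _.
    have [Px|Lx] : (P `|` L) x by rewrite -XE; exact: FX.
      by right.
    have : (F `&` L) x by [].
    by rewrite FLE => /(_ j I); rewrite (hU j).2 => -[]; left.
  split; first exact: FX.
  move=> Zx; have : (\bigcup_j Z j) x by exists j.
  by rewrite -XFPE => -[[_ nFx] _]; apply: nFx.
- move=> [UPx XZx]; have [Xx _] := XZx 0%N I.
  have [Px|Lx] : (P `|` L) x by rewrite -XE.
    apply: contrapT => nFx; have : ((X `\` F) `&` P) x by [].
    by rewrite XFPE => -[j _ Zx]; have [_] := XZx j I.
  suff : (F `&` L) x by case.
  rewrite FLE => j _; rewrite (hU j).2.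
  by have [//|Px] := UPx j I; case: (notP_L Lx Px).
Qed.

Lemma lindelof_closed_subspace : lindelof_sp X op -> lindelof_sp L opL.
Proof.
move=> linX; have XLE : X `&` L = L by apply/setIidr; exact: L_sub_X.
have := covering_restrict (Q := fun D => countable D) (@countable_subset _)
  (@countable_image _ _) (@subset_refl _ X) linX.
by rewrite XLE.
Qed.

Lemma lindelof_from_closed_subspace :
  lindelof_sp P op -> lindelof_sp L opL -> lindelof_sp X op.
Proof.
move=> linP linL C opC coverX.
have [D1 [D1C cD1 coverL]] := covering_lift (Q := fun D => countable D) (@countable_image _ _)
  (@subset_refl _ L) linL opC (subset_trans L_sub_X coverX).
have [D2 [D2C cD2 coverP]] := linP C opC (subset_trans P_sub_X coverX).
exists (D1 `|` D2); split; [by move=> U [/D1C|/D2C] | exact: countableU |].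
by rewrite XE => x [/coverP|/coverL] [U DU Ux]; exists U => //; [right | left].
Qed.

Lemma sigma_compact_closed_subspace :
  sigma_compact_sp X op -> sigma_compact_sp L opL.
Proof.
move=> [K [hK XKE]]; exists (fun j => K j `&` L); split.
  move=> j; split; first exact: subIsetr.
  exact: (covering_restrict (Q := fun D => finite_set D) (@sub_finite_set _)
    (@finite_image _ _) (hK j).1 (hK j).2).
rewrite -setI_bigcupl -XKE; apply/esym/setIidr; exact: L_sub_X.
Qed.

Lemma sigma_compact_from_closed_subspace :
  sigma_compact_sp P op -> sigma_compact_sp L opL -> sigma_compact_sp X op.
Proof.
move=> [K1 [hK1 PE]] [K2 [hK2 LE]]; exists (interleave K1 K2); split.
  move=> j; rewrite /interleave; case: odd.
    split; first exact: subset_trans (hK2 _).1 L_sub_X.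
    exact: (covering_lift (Q := fun D => finite_set D) (@finite_image _ _) (hK2 _).1 (hK2 _).2).
  by split; [exact: subset_trans (hK1 _).1 P_sub_X | exact: (hK1 _).2].
by rewrite bigcup_interleave -PE -LE.
Qed.

End ClosedComplementOfOpen.

Section Euclid.
Variable k : nat.
Implicit Types x y a : pt k.

Lemma coord_le_edist x a i : `|x 0 i - a 0 i| <= Defs.edist x a.
Proof.
rewrite /Defs.edist -sqrtr_sqr ler_sqrt; last by apply: sumr_ge0 => j _; exact: sqr_ge0.
by rewrite (bigD1 i) //= lerDl; apply: sumr_ge0 => j _; exact: sqr_ge0.
Qed.

Lemma edist_le_coord x a r :
  (forall i, `|x 0 i - a 0 i| <= r) -> Defs.edist x a <= k.+1%:R * r.
Proof.
move=> xar; have r0 : 0 <= r by apply: le_trans (xar ord0).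
rewrite /Defs.edist -(ger0_norm (mulr_ge0 (ler0n _ k.+1) r0)) -sqrtr_sqr ler_sqrt;
  last exact: sqr_ge0.
apply: (@le_trans _ _ (\sum_(i < k.+1) r ^+ 2)).
  apply: ler_sum => i _; rewrite -[leLHS](real_normK (num_real _)).
  by rewrite lerXn2r ?nnegrE // xar.
rewrite sumr_const card_ord -[_ *+ _]mulr_natr exprMn [leRHS]mulrC.
by rewrite ler_wpM2l ?sqr_ge0 // expr2 -natrM ler_nat leq_pmulr.
Qed.

Lemma lastc_a_eps a e : lastc (a_eps a e) = e.
Proof. by rewrite /lastc /a_eps mxE eqxx. Qed.

Lemma ball_e_sub_Pn x e : e <= lastc x -> ball_e x e `<=` Pn.
Proof.
move=> ex y; rewrite /ball_e /Pn /= => yx.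
have := coord_le_edist y x ord_max; rewrite ler_distl.
move=> /andP[yx' _]; rewrite /lastc in ex *; lra.
Qed.

Lemma Pn_Ln_disj : Pn `&` Ln = set0 :> set (pt k).
Proof. by apply/seteqP; split => // x [Px Lx]; rewrite /Pn /= Lx ltxx in Px. Qed.

(* [ball] on row vectors is the ball of the sup distance of the product topology. *)
Lemma ball_e_sub_ball x r : ball_e x r `<=` ball x r.
Proof.
move=> y xy; split=> [|i j]; first exact: le_lt_trans (sqrtr_ge0 _) xy.
rewrite ord1 /ball /= distrC; exact: le_lt_trans (coord_le_edist y x j) xy.
Qed.

Lemma nbhs_ball_e x e : 0 < e -> nbhs x (ball_e x e).
Proof.
move=> e0; apply/nbhs_ballP; exists (e / k.+2%:R) => [|y [_ xy]].
  by rewrite /= divr_gt0 ?ltr0n.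
rewrite /ball_e /=; apply: le_lt_trans (edist_le_coord (r := e / k.+2%:R) _) _.
  by move=> i; rewrite distrC ltW //; exact: xy 0 i.
by rewrite mulrA ltr_pdivrMr ?ltr0n // mulrC ltr_pM2l // ltr_nat.
Qed.

End Euclid.

Lemma dist_floor_le (R : archiRealFieldType) (x M : R) :
  0 < M -> `|x - (Num.floor (x * M))%:~R / M| <= M^-1.
Proof.
move=> M0; have /andP[lbx ubx] := floor_itv (x * M).
rewrite -ler_pdivrMr // in lbx; rewrite intrD -ltr_pdivlMr // mulrDl mul1r in ubx.
by rewrite ler_distlC; apply/andP; split; lra.
Qed.

Section Boxes.
Variable k : nat.

(* (z, N) codes the closed cube of half-side 1/(N+1) centred at z/(N+1). *)
Definition gbox_center (t : 'rV[int]_k.+1 * nat) (i : 'I_k.+1) : Defs.Real :=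
  (t.1 0 i)%:~R / t.2.+1%:R.

Definition gbox_radius (t : 'rV[int]_k.+1 * nat) : Defs.Real := t.2.+1%:R^-1.

Definition gbox (t : 'rV[int]_k.+1 * nat) : set (pt k) :=
  [set y | forall i, `|y 0 i - gbox_center t i| <= gbox_radius t].

Lemma gbox_radius_gt0 t : 0 < gbox_radius t.
Proof. by rewrite invr_gt0 ltr0n. Qed.

Lemma gbox_fine (x : pt k) r : 0 < r -> exists t, gbox t x /\ gbox t `<=` ball x r.
Proof.
move=> r0; pose N := Num.truncn (2 / r); pose M : Defs.Real := N.+1%:R.
have M0 : 0 < M by rewrite ltr0n.
pose t := (\row_i Num.floor (x 0 i * M), N).
have xt i : `|x 0 i - gbox_center t i| <= gbox_radius t.
  by rewrite /gbox_center /gbox_radius mxE; apply: dist_floor_le.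
exists t; split => // y yt; split => // i j; rewrite ord1 /ball /=.
have : `|x 0 j - y 0 j| <= 2 * gbox_radius t.
  rewrite mulr2n mulrDl mul1r; apply: le_trans (ler_distD (gbox_center t j) _ _) _.
  by rewrite [X in _ + X]distrC lerD.
move/le_lt_trans; apply; rewrite /gbox_radius -/M ltr_pdivrMr //.
by rewrite mulrC -ltr_pdivrMr // truncnS_gt.
Qed.

Lemma gbox_compact t : compact (gbox t).
Proof.
have -> : gbox t = [set y | forall i,
    `[gbox_center t i - gbox_radius t, gbox_center t i + gbox_radius t]%classic (y ord0 i)].
  by apply/seteqP; split => y yt i; have := yt i; rewrite /= in_itv /= ler_distl.
exact: (@rV_compact _ k.+1
  (fun i => `[gbox_center t i - gbox_radius t, gbox_center t i + gbox_radius t]%classic)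
  (fun i => @segment_compact _ _ _)).
Qed.

Lemma gbox_lastc_ge t y : gbox t y -> gbox_center t ord_max - gbox_radius t <= lastc y.
Proof. by move=> /(_ ord_max); rewrite ler_distl => /andP[]. Qed.

Lemma gbox_sub_Pn_bottom t :
  gbox t `<=` Pn -> 0 < gbox_center t ord_max - gbox_radius t.
Proof.
move=> tP; pose c := \row_i gbox_center t i : pt k.
suff /tP : gbox t (a_eps c (gbox_center t ord_max - gbox_radius t)) by rewrite /Pn /= lastc_a_eps.
move=> i; rewrite /a_eps mxE; case: eqP => [->|_].
  by rewrite addrAC subrr add0r normrN ger0_norm // ltW // gbox_radius_gt0.
by rewrite mxE subrr normr0 ltW // gbox_radius_gt0.
Qed.

Definition boxes_in (O : set (pt k)) (j : nat) : set (pt k) :=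
  if @choice.unpickle ('rV[int]_k.+1 * nat)%type j is Some t then
    if `[< gbox t `<=` O >] then gbox t else set0
  else set0.

Lemma boxes_inP O j :
  boxes_in O j = set0 \/ exists2 t, gbox t `<=` O & boxes_in O j = gbox t.
Proof.
rewrite /boxes_in; case: choice.unpickle => [t|]; last by left.
by case: asboolP => tO; [right; exists t | left].
Qed.

Lemma boxes_in_sub O j : boxes_in O j `<=` O.
Proof. by have [->|[t tO ->]] := boxes_inP O j. Qed.

Lemma boxes_in_compact O j : compact (boxes_in O j).
Proof. by have [->|[t _ ->]] := boxes_inP O j; [exact: compact0 | exact: gbox_compact]. Qed.

Lemma bigcup_boxes_in O : open O -> \bigcup_j boxes_in O j = O.
Proof.
move=> oO; apply/seteqP; split => [x [j _ /boxes_in_sub]//|x Ox].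
have /nbhs_ballP [r r0 xrO] : nbhs x O by rewrite openE in oO; exact: oO.
have [t [xt trO]] := gbox_fine x r0.
have tO : gbox t `<=` O by apply: subset_trans trO xrO.
by exists (choice.pickle t) => //; rewrite /boxes_in choice.pickleK; case: asboolP.
Qed.

End Boxes.

Section TauTopology.
Variables (k : nat) (A : set (pt k)).
Local Notation open_tau := (tau_open A).

Definition tau_nbhs (a : pt k) (W : set (pt k)) : Prop :=
  [/\ Pn a -> exists e, 0 < e /\ e < lastc a /\ ball_e a e `<=` W,
      Ln a -> A a -> exists e, 0 < e /\ ball_e a e `&` Xn `<=` W
    & Ln a -> ~ A a -> exists e, 0 < e /\ tball a e `<=` W].

Lemma tau_openE U : open_tau U <-> U `<=` Xn /\ forall a, U a -> tau_nbhs a U.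
Proof.
split=> -[UX oU]; split=> // a /oU; first by case=> ? [? ?]; split.
by case=> ? ? ?; split=> //; split.
Qed.

Lemma tau_nbhsS a W W' : W `<=` W' -> tau_nbhs a W -> tau_nbhs a W'.
Proof.
move=> WW' [hP hA hnA]; split.
- by move=> /hP [e [e0 [ea s]]]; exists e; do 2 split => //; apply: subset_trans s WW'.
- by move=> La Aa; have [e [e0 s]] := hA La Aa; exists e; split => //; apply: subset_trans s WW'.
- by move=> La nAa; have [e [e0 s]] := hnA La nAa; exists e; split => //; apply: subset_trans s WW'.
Qed.

Lemma tau_nbhs_Pn a W :
  Pn a -> (exists e, 0 < e /\ e < lastc a /\ ball_e a e `<=` W) -> tau_nbhs a W.
Proof.
move=> Pa aW; have nLa : ~ Ln a.
  by move=> La; have : (Pn `&` Ln) a by []; rewrite Pn_Ln_disj.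
by split => // /nLa.
Qed.

Lemma tau_open_sub_Xn U : open_tau U -> U `<=` Xn.
Proof. by case. Qed.

Lemma tau_openU U V : open_tau U -> open_tau V -> open_tau (U `|` V).
Proof.
move=> /tau_openE [UX oU] /tau_openE [VX oV]; apply/tau_openE; split.
  by move=> x [/UX|/VX].
by move=> a [/oU|/oV]; apply: tau_nbhsS; [exact: subsetUl | exact: subsetUr].
Qed.

Lemma tau_open_setIPn U : open U -> open_tau (U `&` Pn).
Proof.
move=> oU; apply/tau_openE; split => [x [_ Px]|a [Ua Pa]]; first by left.
apply: tau_nbhs_Pn => //.
have /nbhs_ballP [r r0 arU] : nbhs a U by rewrite openE in oU; exact: oU.
have m0 : 0 < Num.min r (lastc a) by rewrite lt_min r0.
have mr : Num.min r (lastc a) <= r by rewrite ge_min lexx.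
have ma : Num.min r (lastc a) <= lastc a by rewrite ge_min lexx orbT.
set m := Num.min r (lastc a) in m0 mr ma *.
have ma2 : m / 2 <= lastc a by lra.
exists (m / 2); split; [lra | split; [lra |]].
move=> y ay; split; last exact: ball_e_sub_Pn ma2 _ ay.
by apply/arU/ball_e_sub_ball; apply: lt_le_trans ay _; lra.
Qed.

Lemma tau_openPn : open_tau Pn.
Proof. by rewrite -[Pn]setTI; apply: tau_open_setIPn; exact: openT. Qed.

Lemma tau_openXn : open_tau Xn.
Proof.
apply/tau_openE; split => // a Xa; split.
- move=> Pa; have /tau_openE [_ /(_ a Pa) [/(_ Pa) h _ _]] := tau_openPn.
  by have [e [e0 [ea s]]] := h; exists e; do 2 split => //; apply: subset_trans s _ => y; left.
- by move=> _ _; exists 1; split => // y [].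
- move=> _ _; exists 1; split => // y [->//|/ball_e_sub_Pn]; rewrite lastc_a_eps.
  by move=> /(_ (lexx _)); left.
Qed.

Lemma open_setIPn_of_tau U : open_tau U -> open (U `&` Pn).
Proof.
move=> /tau_openE [_ oU]; rewrite openE => x [Ux Px].
have [/(_ Px) [e [e0 [ex s]]] _ _] := oU x Ux.
apply: filterS (nbhs_ball_e x e0) => y xy.
by split; [exact: s | exact: ball_e_sub_Pn (ltW ex) _ xy].
Qed.

Lemma tau_open_strip c : 0 < c -> open_tau [set y | Xn y /\ lastc y < c].
Proof.
move=> c0; apply/tau_openE; split => [y []//|a [Xa ac]]; split.
- move=> Pa; have a0 : 0 < lastc a := Pa.
  exists (Num.min (lastc a) (c - lastc a) / 2).
  have e0 : 0 < Num.min (lastc a) (c - lastc a) by rewrite lt_min a0 subr_gt0.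
  have e1 : Num.min (lastc a) (c - lastc a) <= lastc a by rewrite ge_min lexx.
  have e2 : Num.min (lastc a) (c - lastc a) <= c - lastc a by rewrite ge_min lexx orbT.
  split; first by rewrite divr_gt0.
  split; first lra.
  move=> y ay; split; first by left; apply: (ball_e_sub_Pn (x := a) (e := _ / 2)) ay; lra.
  have := coord_le_edist y a ord_max; rewrite ler_distl => /andP[_ ya].
  rewrite /ball_e /= in ay; rewrite /lastc in ac e2 *; lra.
- move=> La _; exists c; split => // y [ay Xy]; split => //.
  have := coord_le_edist y a ord_max; rewrite ler_distl => /andP[_ ya].
  rewrite /ball_e /= in ay; rewrite /Ln /lastc /= in La *; lra.
- move=> La _; exists (c / 2); split; first by rewrite divr_gt0.
  move=> y [->//|ay]; rewrite /ball_e /= in ay.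
  have := coord_le_edist y (a_eps a (c / 2)) ord_max.
  rewrite ler_distl -/(lastc _) lastc_a_eps => /andP[ya1 ya2].
  split; first by left; rewrite /Pn /lastc /=; lra.
  rewrite /lastc; lra.
Qed.

Lemma gbox_tau_closed t : gbox t `<=` Pn -> open_tau (Xn `\` gbox t).
Proof.
move=> tP; have c0 := gbox_sub_Pn_bottom tP.
set c := gbox_center t ord_max - gbox_radius t in c0.
have -> : Xn `\` gbox t = [set y | Xn y /\ lastc y < c] `|` (~` gbox t `&` Pn).
  apply/seteqP; split => [y [Xy nty]|y [[Xy yc]|[nty Py]]].
  - have [yc|cy] := ltP (lastc y) c; first by left.
    by right; split => //; apply: lt_le_trans c0 cy.
  - by split => // /gbox_lastc_ge cy; move: yc; rewrite ltNge cy.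
  - by split => //; left.
apply: tau_openU; first exact: tau_open_strip.
apply/tau_open_setIPn/closed_openC.
have ptH : hausdorff_space (pt k) by exact: norm_hausdorff.
exact: (compact_closed ptH (@gbox_compact _ t)).
Qed.

Lemma tau_compact_of_compact K : K `<=` Pn -> compact K -> compact_sp open_tau K.
Proof.
move=> KP; rewrite compact_cover => cK C opC coverK.
have [D DC coverD] := cK (set (pt k)) C (fun U => U `&` Pn)
  (fun U CU => open_setIPn_of_tau (opC U CU))
  (fun x Kx => let: ex_intro2 U CU Ux := coverK x Kx in ex_intro2 _ _ U CU (conj Ux (KP x Kx))).
exists [set` D]; split; [|exact: finite_fset|].
  by move=> U /= DU; have := DC U DU; rewrite in_setE.
by move=> x /coverD [U DU [Ux _]]; exists U.
Qed.

End TauTopology.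

Section PnInXn.
Variables (k : nat) (A : set (pt k)).

Lemma open_Pn : open (@Pn k).
Proof. by rewrite -[Pn]setIid; apply: open_setIPn_of_tau (tau_openPn A). Qed.

Lemma Pn_sigma_compact : sigma_compact_sp Pn (tau_open A).
Proof.
exists (boxes_in Pn); split; last by rewrite bigcup_boxes_in //; exact: open_Pn.
move=> j; split; first exact: boxes_in_sub.
by apply: tau_compact_of_compact; [exact: boxes_in_sub | exact: boxes_in_compact].
Qed.

Lemma open_tau_setIPn_Fsigma V :
  tau_open A V -> Fsigma_sp Xn (tau_open A) (V `&` Pn).
Proof.
move=> oV; exists (boxes_in (V `&` Pn)); split; last first.
  by rewrite bigcup_boxes_in //; exact: open_setIPn_of_tau oV.
move=> j; split; first by move=> x /boxes_in_sub [_ Px]; left.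
have [->|[t tVP ->]] := boxes_inP (V `&` Pn) j; first by rewrite setD0; exact: tau_openXn.
by apply: gbox_tau_closed => x /tVP [].
Qed.

End PnInXn.

Theorem mainTheorem4 (m : nat) (A : set (pt m.+1)) :
  A `<=` Ln ->
  [/\ perfect_sp Xn (tau_open A) <->
        perfect_sp Ln (subspace_open Ln (tau_open A)),
      lindelof_sp Xn (tau_open A) <->
        lindelof_sp Ln (subspace_open Ln (tau_open A))
    & sigma_compact_sp Xn (tau_open A) <->
        sigma_compact_sp Ln (subspace_open Ln (tau_open A))].
Proof.
(* Membership in A only matters at points of L_n. *)
move=> _.
have opX : forall U, tau_open A U -> U `<=` Xn := @tau_open_sub_Xn _ A.
have opU : forall U V, tau_open A U -> tau_open A V -> tau_open A (U `|` V) :=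
  @tau_openU _ A.
have opP : tau_open A Pn := @tau_openPn _ A.
have XE : Xn = Pn `|` Ln :> set (pt m.+1) by [].
have PL0 : Pn `&` Ln = set0 :> set (pt m.+1) := Pn_Ln_disj _.
have sigmaP := Pn_sigma_compact A.
split; split.
- exact: perfect_closed_subspace opX opU opP XE PL0.
- exact: perfect_from_closed_subspace opU opP XE PL0 (@open_tau_setIPn_Fsigma _ A).
- exact: lindelof_closed_subspace opP XE PL0.
- exact: lindelof_from_closed_subspace XE (lindelof_sigma_compact sigmaP).
- exact: sigma_compact_closed_subspace opP XE PL0.
- exact: sigma_compact_from_closed_subspace XE sigmaP.
Qed.
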